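(* Let $n, K$ be positive integers and let $\{t_1,\dots,t_n\}$ be partitioned into $K$ nonempty true clusters $C_1,\dots,C_K$ with sizes $n_j=|C_j|$; set $n_{\min}=\min_j n_j$. Let $g^{\mathrm{True}}\in\{0,1\}^{n\times K}$ with $g^{\mathrm{True}}_{ij}=1$ iff $t_i\in C_j$, and let $g\in\{0,1\}^{n\times K}$ be any estimated assignment matrix in which each row has exactly one entry equal to $1$. Define $\bar p(C_j)=n_j/n$, $\hat p(C_j)=\frac1n\sum_{i=1}^n g_{ij}$, $$\bar{\mathcal E}=-\sum_{j=1}^K \bar p(C_j)\log \bar p(C_j),\qquad \hat{\mathcal E}=-\sum_{j=1}^K \hat p(C_j)\log \hat p(C_j)$$ (with $0\log 0=0$), and $M_{\mathrm{error}}=\sum_{j=1}^K\sum_{i=1}^n \mathbb I(g_{ij}\neq g^{\mathrm{True}}_{ij})$. Suppose there exists $0<c_2<1$ such that $2Kn_{\min}/n\ge c_2$. Then $$|\hat{\mathcal E}-\bar{\mathcal E}|\le h\!\left(\frac{2K}{c_2}\right)\left|\frac{1}{n}M_{\mathrm{error}}\right|,\qquad\text{where } h(x)=x+\log x.$$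
   Context: $\bar{\mathcal E}$ is the empirical (true-cluster) entropy and $\hat{\mathcal E}$ the entropy computed from the estimated clustering; estimated cluster $j$ is compared with true cluster $j$ (labels are aligned). $\log$ is the natural logarithm. *)

From mathcomp Require Import all_boot all_order all_algebra.
From mathcomp Require Import all_classical all_reals exp.
Set Implicit Arguments. Unset Strict Implicit. Unset Printing Implicit Defensive.
Import Order.TTheory GRing.Theory Num.Theory.
Local Open Scope ring_scope.

Definition xlogx (R : realType) (x : R) : R := if x == 0 then 0 else x * ln x.

Definition entropy (R : realType) (K : nat) (p : 'I_K -> R) : R :=
  - \sum_(j < K) xlogx (p j).

Definition gTrue (n K : nat) (lab : 'I_n -> 'I_K) (i : 'I_n) (j : 'I_K) : bool :=
  lab i == j.

Definition cluster (n K : nat) (lab : 'I_n -> 'I_K) (j : 'I_K) : {set 'I_n} :=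
  [set i | lab i == j].

Definition pbar (R : realType) (n K : nat) (lab : 'I_n -> 'I_K) (j : 'I_K) : R :=
  (#|cluster lab j|%:R) / n%:R.

Definition phat (R : realType) (n K : nat) (g : 'I_n -> 'I_K -> bool) (j : 'I_K) : R :=
  (\sum_(i < n) (g i j)%:R) / n%:R.

Definition M_error (n K : nat) (lab : 'I_n -> 'I_K) (g : 'I_n -> 'I_K -> bool) : nat :=
  \sum_(j < K) \sum_(i < n) (g i j != gTrue lab i j).

Definition n_min (n K : nat) (lab : 'I_n -> 'I_K) : nat :=
  \big[minn/n]_(j < K) #|cluster lab j|.

Definition hfun (R : realType) (x : R) : R := x + ln x.

From mathcomp Require Import all_boot all_order all_algebra.
From mathcomp Require Import all_classical all_reals exp.
From mathcomp Require Import ring lra.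
Import Order.TTheory GRing.Theory Num.Theory.
Local Open Scope ring_scope.

(** Split [q ln q - p ln p = q ln (q / p) + (q - p) ln p].  By [ln y <= y - 1]
   applied to [q / p] and [p / q], [q ln (q / p)] lies between [q - p] and
   [(q / p) (q - p)]; and [|ln p| <= ln x] as soon as [1 / x <= p <= 1].  So
   [t ln t] is [(x + ln x)]-Lipschitz between any [q] in [[0, 1]] and any
   [p >= 1 / x].  The balance assumption gives [pbar j >= n_min / n >= 1 / x]
   for [x = 2K / c2], and [|phat j - pbar j|] is at most the number of wrong
   entries in column [j] divided by [n]; summing over the clusters gives the
   bound. *)

Section XLogX.
Variable R : realType.
Implicit Types p q x y : R.

Lemma ln_le_subr1 y : 0 < y -> ln y <= y - 1.
Proof. by move=> y_gt0; have := @le_ln1Dx R (y - 1); rewrite addrCA subrr addr0; apply; lra. Qed.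

Lemma xlogxE x : xlogx x = x * ln x.
Proof. by rewrite /xlogx; case: eqP => [->|//]; rewrite mul0r. Qed.

Lemma norm_mul_lnB p q x : 0 < p -> 0 <= q -> 1 <= x -> q <= x * p ->
  `|q * (ln q - ln p)| <= x * `|q - p|.
Proof.
move=> p_gt0 q_ge0 x_ge1 q_le; have [q_gt0|] := ltrP 0 q; last first.
  move=> q_le0; have -> : q = 0 by lra.
  by rewrite mul0r normr0 mulr_ge0 //; lra.
rewrite -ln_div ?posrE //; set r := q / p.
have r_gt0 : 0 < r by rewrite divr_gt0.
have q_eq : q = r * p by rewrite /r divfK ?gt_eqF.
have r_le : r <= x by rewrite ler_pdivrMr.
have up : q * ln r <= r * (q - p).
  have -> : r * (q - p) = q * (r - 1) by rewrite q_eq; ring.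
  by apply: ler_wpM2l; [exact: ltW | exact: ln_le_subr1].
have low : q - p <= q * ln r.
  have : q * ln r^-1 <= q * (r^-1 - 1).
    by apply: ler_wpM2l; [exact: ltW | apply: ln_le_subr1; rewrite invr_gt0].
  have -> : q * (r^-1 - 1) = p - q by rewrite q_eq mulrBr mulrAC mulfV ?gt_eqF // mul1r mulr1.
  by rewrite lnV ?posrE // mulrN; lra.
have [pq|qp] := lerP p q.
- by rewrite !ger0_norm; nra.
- by rewrite !ler0_norm; nra.
Qed.

Lemma norm_ln_le p x : 0 < p <= 1 -> 1 <= x * p -> `|ln p| <= ln x.
Proof.
move=> /andP[p_gt0 p_le1] xp_ge1; have x_gt0 : 0 < x by nra.
rewrite ler0_norm ?ln_le0 // -lnV ?posrE // ler_ln ?posrE ?invr_gt0 //.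
by rewrite -[p^-1]mul1r ler_pdivrMr.
Qed.

Lemma xlogx_lipschitz p q x : 0 < p <= 1 -> 0 <= q <= 1 -> 1 <= x * p ->
  `|xlogx q - xlogx p| <= hfun x * `|q - p|.
Proof.
move=> /[dup] p01 /andP[p_gt0 p_le1] /andP[q_ge0 q_le1] xp_ge1.
have x_ge1 : 1 <= x by nra.
have -> : xlogx q - xlogx p = q * (ln q - ln p) + (q - p) * ln p by rewrite !xlogxE; ring.
rewrite /hfun [(x + _) * _]mulrDl; apply: le_trans (ler_normD _ _) _; apply: lerD.
  by apply: norm_mul_lnB => //; lra.
by rewrite normrM mulrC ler_wpM2r // norm_ln_le.
Qed.

End XLogX.

Lemma norm_entropyB (R : realType) (K : nat) (p q : 'I_K -> R) :
  `|entropy q - entropy p| <= \sum_(j < K) `|xlogx (q j) - xlogx (p j)|.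
Proof. by rewrite /entropy distrC opprK addrC -sumrB ler_norm_sum. Qed.

Lemma ler_norm_sum_boolB (R : numDomainType) (I : Type) (r : seq I) (a b : I -> bool) :
  `|\sum_(i <- r) (a i)%:R - \sum_(i <- r) (b i)%:R| <= (\sum_(i <- r) (a i != b i))%:R :> R.
Proof.
rewrite -sumrB natr_sum; apply: le_trans (ler_norm_sum _ _ _) _; apply: ler_sum => i _.
by case: (a i) (b i) => [] []; rewrite /= ?subrr ?subr0 ?sub0r ?normrN ?normr0 ?normr1.
Qed.

Lemma card_cluster (n K : nat) (lab : 'I_n -> 'I_K) (j : 'I_K) :
  #|cluster lab j| = (\sum_(i < n) gTrue lab i j)%N.
Proof.
by rewrite -sum1_card big_mkcond; apply: eq_bigr => i _; rewrite inE /gTrue; case: (lab i == j).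
Qed.

Lemma n_min_le_card (n K : nat) (lab : 'I_n -> 'I_K) (j : 'I_K) :
  (n_min lab <= #|cluster lab j|)%N.
Proof. exact: (@bigmin_le _ nat). Qed.

Section ClusterFrequencies.
Variables (R : realType) (n K : nat) (lab : 'I_n -> 'I_K) (g : 'I_n -> 'I_K -> bool).
Hypothesis n_gt0 : (0 < n)%N.

Let n_gt0R : 0 < n%:R :> R. Proof. by rewrite ltr0n. Qed.

Lemma phat_ge0 j : 0 <= phat R g j.
Proof. by rewrite divr_ge0 ?sumr_ge0. Qed.

Lemma phat_le1 j : phat R g j <= 1.
Proof.
rewrite ler_pdivrMr // mul1r -[n in n%:R](card_ord n) -sumr_const.
by apply: ler_sum => i _; case: (g i j).
Qed.

Lemma pbar_gt0 j : (0 < #|cluster lab j|)%N -> 0 < pbar R lab j.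
Proof. by move=> card_gt0; rewrite divr_gt0 ?ltr0n. Qed.

Lemma pbar_le1 j : pbar R lab j <= 1.
Proof. by rewrite ler_pdivrMr // mul1r ler_nat -[X in (_ <= X)%N](card_ord n) max_card. Qed.

Lemma n_min_div_le_pbar j : (n_min lab)%:R / n%:R <= pbar R lab j.
Proof. by rewrite ler_wpM2r ?invr_ge0 ?ler0n // ler_nat n_min_le_card. Qed.

Lemma norm_phatB_pbar j :
  `|phat R g j - pbar R lab j| <= (\sum_(i < n) (g i j != gTrue lab i j))%:R / n%:R.
Proof.
rewrite /phat /pbar card_cluster natr_sum -mulrBl normrM [`|_^-1|]ger0_norm ?invr_ge0 //.
by apply: ler_wpM2r; rewrite ?invr_ge0 ?ler_norm_sum_boolB.
Qed.

End ClusterFrequencies.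

Lemma M_error_div (R : realType) (n K : nat) (lab : 'I_n -> 'I_K) (g : 'I_n -> 'I_K -> bool) :
  (M_error lab g)%:R / n%:R = \sum_(j < K) (\sum_(i < n) (g i j != gTrue lab i j))%:R / n%:R :> R.
Proof. by rewrite /M_error natr_sum mulr_suml. Qed.

Theorem lemma1 (R : realType) (n K : nat) (lab : 'I_n -> 'I_K)
    (g : 'I_n -> 'I_K -> bool) :
  (0 < n)%N -> (0 < K)%N ->
  (forall j : 'I_K, (0 < #|cluster lab j|)%N) ->
  (forall i : 'I_n, #|[set j | g i j]| = 1%N) ->
  forall c2 : R, 0 < c2 -> c2 < 1 ->
    c2 <= (2 * K%:R * (n_min lab)%:R) / n%:R ->
  `|entropy (phat R g) - entropy (pbar R lab)|
    <= hfun (2 * K%:R / c2) * `|(M_error lab g)%:R / n%:R|.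
Proof.
move=> n_gt0 K_gt0 cluster_gt0 _ c2 c2_gt0 c2_lt1 c2_le.
set x := 2 * K%:R / c2.
have hfun_ge0 : 0 <= hfun x.
  have K_ge1 : 1 <= K%:R :> R by rewrite ler1n.
  have x_ge1 : 1 <= x by rewrite /x ler_pdivlMr // mul1r; lra.
  by rewrite /hfun addr_ge0 ?ln_ge0 //; lra.
have xpbar_ge1 j : 1 <= x * pbar R lab j.
  rewrite /x mulrAC ler_pdivlMr // mul1r (le_trans c2_le) // -mulrA.
  by rewrite ler_wpM2l ?mulr_ge0 ?ler0n ?n_min_div_le_pbar.
rewrite [`|_%:R / _|]ger0_norm ?divr_ge0 // M_error_div mulr_sumr.
apply: le_trans (norm_entropyB _ _ _ _) _; apply: ler_sum => j _.
apply: le_trans (xlogx_lipschitz _ _ _ _ _ _ (xpbar_ge1 j)) _.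
- by rewrite pbar_gt0 ?cluster_gt0 ?pbar_le1.
- by rewrite phat_ge0 phat_le1.
- by rewrite ler_wpM2l ?norm_phatB_pbar.
Qed.
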